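(* Let $\kappa\in\mathbb{K}$, let $(\mathfrak{g},[-,-,-]_\mathfrak{g},\alpha_\mathfrak{g})$ and $(\mathfrak{h},[-,-,-]_\mathfrak{h},\alpha_\mathfrak{h})$ be Hom-Lie triple systems and $\theta$ an action of $\mathfrak{g}$ on $\mathfrak{h}$. A linear map $\mathcal{A}:\mathfrak{h}\to\mathfrak{g}$ is a $\kappa$-weighted $\mathcal{O}$-operator from $\mathfrak{h}$ to $\mathfrak{g}$ with respect to $\theta$ if and only if the linear map $N_\mathcal{A}:\mathfrak{g}\oplus\mathfrak{h}\to\mathfrak{g}\oplus\mathfrak{h}$, $N_\mathcal{A}(x+u)=x+\mathcal{A}u$ (block matrix $\begin{pmatrix}\mathrm{id}&\mathcal{A}\\0&0\end{pmatrix}$), is a Nijenhuis operator on the semidirect product Hom-Lie triple system $\mathfrak{g}\ltimes_\theta\mathfrak{h}$.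
   Context: All vector spaces are over a field $\mathbb{K}$ of characteristic zero. A Hom-Lie triple system $(\mathfrak{g},[-,-,-]_\mathfrak{g},\alpha_\mathfrak{g})$ is a vector space $\mathfrak{g}$ with a trilinear map $[-,-,-]_\mathfrak{g}$ and a linear map $\alpha_\mathfrak{g}$ with $\alpha_\mathfrak{g}([x,y,z]_\mathfrak{g})=[\alpha_\mathfrak{g}(x),\alpha_\mathfrak{g}(y),\alpha_\mathfrak{g}(z)]_\mathfrak{g}$ such that for all $x,y,z,a,b$: $[x,y,z]_\mathfrak{g}+[y,x,z]_\mathfrak{g}=0$; $[x,y,z]_\mathfrak{g}+[z,x,y]_\mathfrak{g}+[y,z,x]_\mathfrak{g}=0$; $[\alpha_\mathfrak{g}(a),\alpha_\mathfrak{g}(b),[x,y,z]_\mathfrak{g}]_\mathfrak{g}=[[a,b,x]_\mathfrak{g},\alpha_\mathfrak{g}(y),\alpha_\mathfrak{g}(z)]_\mathfrak{g}+[\alpha_\mathfrak{g}(x),[a,b,y]_\mathfrak{g},\alpha_\mathfrak{g}(z)]_\mathfrak{g}+[\alpha_\mathfrak{g}(x),\alpha_\mathfrak{g}(y),[a,b,z]_\mathfrak{g}]_\mathfrak{g}$. A representation of $\mathfrak{g}$ on $(V,\beta)$ is a bilinear map $\theta:\mathfrak{g}\times\mathfrak{g}\to\mathrm{End}(V)$ such that, with $D(x,y)=\theta(y,x)-\theta(x,y)$, for all $x,y,a,b$: $\theta(\alpha_\mathfrak{g}(x),\alpha_\mathfrak{g}(y))\circ\beta=\beta\circ\theta(x,y)$;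 $\theta(\alpha_\mathfrak{g}(a),\alpha_\mathfrak{g}(b))\theta(x,y)-\theta(\alpha_\mathfrak{g}(y),\alpha_\mathfrak{g}(b))\theta(x,a)-\theta(\alpha_\mathfrak{g}(x),[y,a,b]_\mathfrak{g})\circ\beta+D(\alpha_\mathfrak{g}(y),\alpha_\mathfrak{g}(a))\theta(x,b)=0$; $\theta(\alpha_\mathfrak{g}(a),\alpha_\mathfrak{g}(b))D(x,y)-D(\alpha_\mathfrak{g}(x),\alpha_\mathfrak{g}(y))\theta(a,b)+\theta([x,y,a]_\mathfrak{g},\alpha_\mathfrak{g}(b))\circ\beta+\theta(\alpha_\mathfrak{g}(a),[x,y,b]_\mathfrak{g})\circ\beta=0$. An action of $\mathfrak{g}$ on a Hom-Lie triple system $(\mathfrak{h},[-,-,-]_\mathfrak{h},\alpha_\mathfrak{h})$ is a representation $\theta$ of $\mathfrak{g}$ on $(\mathfrak{h},\alpha_\mathfrak{h})$ such that for all $x,y\in\mathfrak{g}$, $u,v,w\in\mathfrak{h}$: $\theta(\alpha_\mathfrak{g}(x),\alpha_\mathfrak{g}(y))[u,v,w]_\mathfrak{h}=[\theta(x,y)u,\alpha_\mathfrak{h}(v),\alpha_\mathfrak{h}(w)]_\mathfrak{h}+[\alpha_\mathfrak{h}(u),\theta(x,y)v,\alpha_\mathfrak{h}(w)]_\mathfrak{h}+[\alpha_\mathfrak{h}(u),\alpha_\mathfrak{h}(v),\theta(x,y)w]_\mathfrak{h}$ and $\theta(\alpha_\mathfrak{g}(x),\alpha_\mathfrak{g}(y))[u,v,w]_\mathfrak{h}=[\alpha_\mathfrak{h}(u),\alpha_\mathfrak{h}(v),\theta(x,y)w]_\mathfrak{h}=0$.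 The semidirect product $\mathfrak{g}\ltimes_\theta\mathfrak{h}$ is $\mathfrak{g}\oplus\mathfrak{h}$ with twist map $(\alpha_\mathfrak{g}\oplus\alpha_\mathfrak{h})(x+u)=\alpha_\mathfrak{g}(x)+\alpha_\mathfrak{h}(u)$ and bracket $[x+u,y+v,z+w]_\theta=[x,y,z]_\mathfrak{g}+D(x,y)w-\theta(x,z)v+\theta(y,z)u+\kappa[u,v,w]_\mathfrak{h}$; it is a Hom-Lie triple system. A $\kappa$-weighted $\mathcal{O}$-operator from $\mathfrak{h}$ to $\mathfrak{g}$ with respect to $\theta$ is a linear map $\mathcal{A}:\mathfrak{h}\to\mathfrak{g}$ with $\mathcal{A}\circ\alpha_\mathfrak{h}=\alpha_\mathfrak{g}\circ\mathcal{A}$ and $[\mathcal{A}u,\mathcal{A}v,\mathcal{A}w]_\mathfrak{g}=\mathcal{A}\big(D(\mathcal{A}u,\mathcal{A}v)w-\theta(\mathcal{A}u,\mathcal{A}w)v+\theta(\mathcal{A}v,\mathcal{A}w)u+\kappa[u,v,w]_\mathfrak{h}\big)$ for all $u,v,w\in\mathfrak{h}$. A Nijenhuis operator on a Hom-Lie triple system $(L,[-,-,-],\alpha)$ is a linear map $N:L\to L$ with $N\circ\alpha=\alpha\circ N$ and, for all $x,y,z\in L$, $[Nx,Ny,Nz]=N([x,Ny,Nz]+[Nx,y,Nz]+[Nx,Ny,z])-N^2([Nx,y,z]+[x,Ny,z]+[x,y,Nz])+N^3[x,y,z]$. *)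

From HB Require Import structures.
From mathcomp Require Import all_boot all_order all_algebra.
Set Implicit Arguments. Unset Strict Implicit. Unset Printing Implicit Defensive.
Import GRing.Theory.
Local Open Scope ring_scope.

Section HomLTS.
Variable K : fieldType.

Definition lin (U V : lmodType K) (f : U -> V) : Prop :=
  forall (a : K) (u v : U), f (a *: u + v) = a *: f u + f v.

Definition trilin (V : lmodType K) (br : V -> V -> V -> V) : Prop :=
  (forall y z, lin (fun x => br x y z)) /\
  (forall x z, lin (fun y => br x y z)) /\
  (forall x y, lin (fun z => br x y z)).

Definition HomLTS (V : lmodType K) (br : V -> V -> V -> V) (al : V -> V) : Prop :=
  [/\ trilin br, lin al,
      (forall x y z, al (br x y z) = br (al x) (al y) (al z)) &
      [/\ (forall x y z, br x y z + br y x z = 0),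
      (forall x y z, br x y z + br z x y + br y z x = 0) &
      (forall a b x y z,
        br (al a) (al b) (br x y z) =
        br (br a b x) (al y) (al z) + br (al x) (br a b y) (al z)
        + br (al x) (al y) (br a b z))]].

Definition Dop (G V : lmodType K) (theta : G -> G -> V -> V) (x y : G) (v : V) : V :=
  theta y x v - theta x y v.

Definition representation (G V : lmodType K) (brg : G -> G -> G -> G) (alg : G -> G)
    (theta : G -> G -> V -> V) (be : V -> V) : Prop :=
  [/\ lin be,
      (forall x y, lin (theta x y)),
      (forall y v, lin (fun x => theta x y v)),
      (forall x v, lin (fun y => theta x y v)) &
      [/\ (forall x y v, theta (alg x) (alg y) (be v) = be (theta x y v)),
      (forall x y a b v,
        theta (alg a) (alg b) (theta x y v) - theta (alg y) (alg b) (theta x a v)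
        - theta (alg x) (brg y a b) (be v) + Dop theta (alg y) (alg a) (theta x b v) = 0) &
      (forall x y a b v,
        theta (alg a) (alg b) (Dop theta x y v) - Dop theta (alg x) (alg y) (theta a b v)
        + theta (brg x y a) (alg b) (be v) + theta (alg a) (brg x y b) (be v) = 0)]].

Definition action (G H : lmodType K) (brg : G -> G -> G -> G) (alg : G -> G)
    (brh : H -> H -> H -> H) (alh : H -> H) (theta : G -> G -> H -> H) : Prop :=
  [/\ representation brg alg theta alh,
      (forall x y u v w,
        theta (alg x) (alg y) (brh u v w) =
        brh (theta x y u) (alh v) (alh w) + brh (alh u) (theta x y v) (alh w)
        + brh (alh u) (alh v) (theta x y w)),
      (forall x y u v w, theta (alg x) (alg y) (brh u v w) = 0) &
      (forall x y u v w, brh (alh u) (alh v) (theta x y w) = 0)].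

(* Semidirect product g ⋉_theta h on g * h (x + u is the pair (x, u)). *)
Definition sd_bracket (G H : lmodType K) (brg : G -> G -> G -> G)
    (brh : H -> H -> H -> H) (theta : G -> G -> H -> H) (kappa : K)
    (p q r : G * H) : G * H :=
  let: (x, u) := p in let: (y, v) := q in let: (z, w) := r in
  (brg x y z, Dop theta x y w - theta x z v + theta y z u + kappa *: brh u v w).

Definition sd_twist (G H : lmodType K) (alg : G -> G) (alh : H -> H) (p : G * H) : G * H :=
  (alg p.1, alh p.2).

Definition O_operator (G H : lmodType K) (brg : G -> G -> G -> G) (alg : G -> G)
    (brh : H -> H -> H -> H) (alh : H -> H) (theta : G -> G -> H -> H) (kappa : K)
    (A : H -> G) : Prop :=
  lin A /\
  (forall u, A (alh u) = alg (A u)) /\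
  (forall u v w,
    brg (A u) (A v) (A w) =
    A (Dop theta (A u) (A v) w - theta (A u) (A w) v + theta (A v) (A w) u
       + kappa *: brh u v w)).

Definition Nijenhuis (L : lmodType K) (br : L -> L -> L -> L) (al : L -> L)
    (N : L -> L) : Prop :=
  lin N /\
  (forall x, N (al x) = al (N x)) /\
  (forall x y z,
    br (N x) (N y) (N z) =
    N (br x (N y) (N z) + br (N x) y (N z) + br (N x) (N y) z)
    - N (N (br (N x) y z + br x (N y) z + br x y (N z)))
    + N (N (N (br x y z)))).

Definition N_of (G H : lmodType K) (A : H -> G) (p : G * H) : G * H :=
  (p.1 + A p.2, 0).

End HomLTS.

(* N_A is idempotent, and expanding [p - N p, q - N q, r - N r] trilinearly shows
   that for an idempotent N the right-hand side of the Nijenhuis identity equals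
   N [N p, N q, N r] + N [p - N p, q - N q, r - N r].  The image of N_A is g, which
   is closed under the bracket and fixed by N_A, so the first term is [N p, N q, N r];
   and p - N_A p = (- A u, u) lies in the graph of - A, on which N_A [-, -, -] is
   (A (D(Au,Av)w - theta(Au,Aw)v + theta(Av,Aw)u + kappa [u,v,w]) - [Au,Av,Aw], 0).
   Hence the Nijenhuis identity at (p, q, r) is the O-operator identity at the
   h-components of p, q, r, while commuting with the twist amounts to
   A alpha_h = alpha_g A. *)

From mathcomp Require Import all_boot all_order all_algebra.
Set Implicit Arguments. Unset Strict Implicit. Unset Printing Implicit Defensive.
Import GRing.Theory.
Local Open Scope ring_scope.

Section Linearity.
Variables (K : fieldType) (U V W : lmodType K).

Lemma linD (f : U -> V) : lin f -> forall u v, f (u + v) = f u + f v.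
Proof. by move=> f_lin u v; have := f_lin 1 u v; rewrite !scale1r. Qed.

Lemma lin0 (f : U -> V) : lin f -> f 0 = 0.
Proof. by move=> f_lin; apply: (addrI (f 0)); rewrite -linD // !addr0. Qed.

Lemma linN (f : U -> V) : lin f -> forall u, f (- u) = - f u.
Proof. by move=> f_lin u; rewrite -scaleN1r -[_ *: u]addr0 f_lin lin0 // addr0 scaleN1r. Qed.

Lemma linB (f : U -> V) : lin f -> forall u v, f (u - v) = f u - f v.
Proof. by move=> f_lin u v; rewrite linD // linN. Qed.

Lemma lin_ext (f g : U -> V) : f =1 g -> lin f -> lin g.
Proof. by move=> fg f_lin a u v; rewrite -!fg. Qed.

Lemma lin_zero : lin (fun _ : U => 0 : V).
Proof. by move=> a u v; rewrite scaler0 addr0. Qed.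

Lemma lin_add (f g : U -> V) : lin f -> lin g -> lin (f \+ g).
Proof. by move=> f_lin g_lin a u v /=; rewrite f_lin g_lin scalerDr addrACA. Qed.

Lemma lin_sub (f g : U -> V) : lin f -> lin g -> lin (f \- g).
Proof. by move=> f_lin g_lin a u v /=; rewrite f_lin g_lin scalerBr opprD addrACA. Qed.

Lemma lin_scale (c : K) (f : U -> V) : lin f -> lin (c \*: f).
Proof. by move=> f_lin a u v /=; rewrite f_lin scalerDr !scalerA mulrC. Qed.

Lemma lin_comp (f : V -> W) (g : U -> V) : lin f -> lin g -> lin (f \o g).
Proof. by move=> f_lin g_lin a u v /=; rewrite g_lin f_lin. Qed.

Lemma lin_fst : lin (@fst U V).
Proof. by []. Qed.

Lemma lin_snd : lin (@snd U V).
Proof. by []. Qed.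

Lemma lin_pair (f : U -> V) (g : U -> W) : lin f -> lin g -> lin (fun u => (f u, g u)).
Proof. by move=> f_lin g_lin a u v; rewrite f_lin g_lin. Qed.

End Linearity.

Arguments lin_zero {K U V}.
Arguments lin_fst {K U V}.
Arguments lin_snd {K U V}.

Section IdempotentNijenhuis.
Variables (K : fieldType) (L : lmodType K) (br : L -> L -> L -> L) (N : L -> L).
Hypothesis br_tri : trilin br.

Lemma trilin_subE x x' y y' z z' :
  br (x - x') (y - y') (z - z') =
  (br x y' z' + br x' y z' + br x' y' z) - (br x' y z + br x y' z + br x y z')
  + br x y z - br x' y' z'.
Proof.
case: br_tri => [lin1 [lin2 lin3]].
rewrite (linB (lin1 _ _)) !(linB (lin2 _ _)) !(linB (lin3 _ _)) !opprB !opprD !addrA.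
by rewrite [LHS](ACl (3*7*5*8*4*2*1*6)).
Qed.

Hypotheses (N_lin : lin N) (N_idem : forall x, N (N x) = N x).

Lemma idempotent_Nijenhuis_rhsE x y z :
  N (br x (N y) (N z) + br (N x) y (N z) + br (N x) (N y) z)
  - N (N (br (N x) y z + br x (N y) z + br x y (N z))) + N (N (N (br x y z)))
  = N (br (x - N x) (y - N y) (z - N z)) + N (br (N x) (N y) (N z)).
Proof.
by rewrite !N_idem -(linB N_lin) -!(linD N_lin) trilin_subE subrK.
Qed.

End IdempotentNijenhuis.

Section SemidirectProduct.
Variables (K : fieldType) (kappa : K) (G H : lmodType K).
Variables (brg : G -> G -> G -> G) (brh : H -> H -> H -> H) (theta : G -> G -> H -> H).
Hypotheses (brg_tri : trilin brg) (brh_tri : trilin brh).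
Hypotheses (theta_lin : forall x y, lin (theta x y))
  (theta_lin1 : forall y v, lin (fun x => theta x y v))
  (theta_lin2 : forall x v, lin (fun y => theta x y v)).

Local Notation br := (sd_bracket brg brh theta kappa).

Lemma sd_bracketE p q r : br p q r =
  (brg p.1 q.1 r.1,
   Dop theta p.1 q.1 r.2 - theta p.1 r.1 q.2 + theta q.1 r.1 p.2 + kappa *: brh p.2 q.2 r.2).
Proof. by case: p q r => [x u] [y v] [z w]. Qed.

Lemma sd_bracket_trilin : trilin br.
Proof.
case: brg_tri brh_tri => [g1 [g2 g3]] [h1 [h2 h3]].
have Dop_lin1 y w : lin (fun x => Dop theta x y w) by exact: lin_sub.
have Dop_lin2 x w : lin (fun y => Dop theta x y w) by exact: lin_sub.
have Dop_lin x y : lin (Dop theta x y) by exact: lin_sub.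
split; [|split].
- move=> [y v] [z w]; apply: (lin_ext (fun p => esym (sd_bracketE p _ _))).
  apply: lin_pair; first exact: lin_comp (g1 y z) lin_fst.
  apply: lin_add; [apply: lin_add; [apply: lin_sub|] | apply: lin_scale].
  + exact: lin_comp (Dop_lin1 y w) lin_fst.
  + exact: lin_comp (theta_lin1 z v) lin_fst.
  + exact: lin_comp (theta_lin y z) lin_snd.
  + exact: lin_comp (h1 v w) lin_snd.
- move=> [x u] [z w]; apply: (lin_ext (fun q => esym (sd_bracketE _ q _))).
  apply: lin_pair; first exact: lin_comp (g2 x z) lin_fst.
  apply: lin_add; [apply: lin_add; [apply: lin_sub|] | apply: lin_scale].
  + exact: lin_comp (Dop_lin2 x w) lin_fst.
  + exact: lin_comp (theta_lin x z) lin_snd.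
  + exact: lin_comp (theta_lin1 z u) lin_fst.
  + exact: lin_comp (h2 u w) lin_snd.
- move=> [x u] [y v]; apply: (lin_ext (fun r => esym (sd_bracketE _ _ r))).
  apply: lin_pair; first exact: lin_comp (g3 x y) lin_fst.
  apply: lin_add; [apply: lin_add; [apply: lin_sub|] | apply: lin_scale].
  + exact: lin_comp (Dop_lin x y) lin_snd.
  + exact: lin_comp (theta_lin2 x v) lin_fst.
  + exact: lin_comp (theta_lin2 y u) lin_fst.
  + exact: lin_comp (h3 u v) lin_snd.
Qed.

Lemma sd_bracket_on_g x y z : br (x, 0) (y, 0) (z, 0) = (brg x y z, 0).
Proof.
case: brh_tri => _ [_ h3].
by rewrite /= /Dop !(lin0 (theta_lin _ _)) (lin0 (h3 _ _)) scaler0 !subrr !addr0.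
Qed.

Variable A : H -> G.
Hypothesis A_lin : lin A.

Local Notation N := (N_of A).

Lemma N_of_lin : lin N.
Proof. exact: lin_pair (lin_add lin_fst (lin_comp A_lin lin_snd)) lin_zero. Qed.

Lemma N_of_idem p : N (N p) = N p.
Proof. by rewrite /N_of /= (lin0 A_lin) addr0. Qed.

Lemma N_of_sd_bracket_N p q r : N (br (N p) (N q) (N r)) = br (N p) (N q) (N r).
Proof. by rewrite /N_of sd_bracket_on_g /= (lin0 A_lin) addr0. Qed.

Lemma sub_N_of p : p - N p = (- A p.2, p.2).
Proof. by case: p => x u; rewrite -[LHS]/(x - (x + A u), u - 0) opprD addNKr subr0. Qed.

Lemma N_of_sd_bracket_graph u v w :
  N (br (- A u, u) (- A v, v) (- A w, w)) =
  (A (Dop theta (A u) (A v) w - theta (A u) (A w) v + theta (A v) (A w) u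
      + kappa *: brh u v w) - brg (A u) (A v) (A w), 0).
Proof.
case: brg_tri => [g1 [g2 g3]].
rewrite /N_of /= /Dop (linN (g1 _ _)) (linN (g2 _ _)) (linN (g3 _ _)) !opprK.
by rewrite !(linN (theta_lin1 _ _)) !(linN (theta_lin2 _ _)) !opprK addrC.
Qed.

Lemma N_of_NijenhuisP p q r :
  br (N p) (N q) (N r) =
    N (br p (N q) (N r) + br (N p) q (N r) + br (N p) (N q) r)
    - N (N (br (N p) q r + br p (N q) r + br p q (N r))) + N (N (N (br p q r)))
  <-> brg (A p.2) (A q.2) (A r.2) =
    A (Dop theta (A p.2) (A q.2) r.2 - theta (A p.2) (A r.2) q.2
       + theta (A q.2) (A r.2) p.2 + kappa *: brh p.2 q.2 r.2).
Proof.
rewrite (idempotent_Nijenhuis_rhsE sd_bracket_trilin N_of_lin N_of_idem).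
rewrite N_of_sd_bracket_N !sub_N_of N_of_sd_bracket_graph -[X in X = _]add0r.
by split=> [/addIr/(congr1 fst)/esym/subr0_eq/esym | ->]; last rewrite subrr.
Qed.

End SemidirectProduct.

Lemma N_of_twistP (K : fieldType) (G H : lmodType K) (alg : G -> G) (alh : H -> H)
    (A : H -> G) :
  lin alg -> lin alh ->
  (forall p, N_of A (sd_twist alg alh p) = sd_twist alg alh (N_of A p)) <->
  (forall u, A (alh u) = alg (A u)).
Proof.
move=> alg_lin alh_lin; rewrite /N_of /sd_twist.
split=> [twist u | A_twist [x u] /=]; last by rewrite A_twist (linD alg_lin) (lin0 alh_lin).
by have := congr1 fst (twist (0, u)); rewrite /= (lin0 alg_lin) !add0r.
Qed.

Theorem mainTheorem3 (K : fieldType) (charK : [pchar K] =i pred0) (kappa : K)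
    (G H : lmodType K)
    (brg : G -> G -> G -> G) (alg : G -> G)
    (brh : H -> H -> H -> H) (alh : H -> H)
    (theta : G -> G -> H -> H)
    (HG : HomLTS brg alg) (HH : HomLTS brh alh)
    (Hact : action brg alg brh alh theta)
    (A : H -> G) (HA : lin A) :
  O_operator brg alg brh alh theta kappa A <->
  Nijenhuis (sd_bracket brg brh theta kappa) (sd_twist alg alh) (N_of A).
Proof.
case: HG HH Hact => [brg_tri alg_lin _ _] [brh_tri alh_lin _ _].
case=> [[_ theta_lin theta_lin1 theta_lin2 _] _ _ _].
have NijenhuisP :=
  N_of_NijenhuisP kappa brg_tri brh_tri theta_lin theta_lin1 theta_lin2 HA.
have twistP := N_of_twistP A alg_lin alh_lin.
split=> [[_ [A_twist A_O]] | [_ [N_twist N_id]]].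
- split; first exact: N_of_lin.
  by split=> [|p q r]; [apply/twistP | apply/NijenhuisP/A_O].
- split=> //; split=> [|u v w]; first exact/twistP.
  exact/(NijenhuisP (0, u) (0, v) (0, w)).
Qed.
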